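(* Let $A=\langle V,\textit{val}_0,\delta\rangle$ be an arena over disjoint finite Boolean sets $\mathbb{E},\mathbb{C}$, let $Pr\subseteq Pred(V)$ and $\mathbb{E}'\supseteq\mathbb{E}$ be finite, and let $M=\langle S,s_0,2^{\mathbb{C}},2^{\mathbb{E}'\cup Pr},\rightarrow,out\rangle$ be a counterstrategy (Moore machine) that is not concretisable w.r.t. $A$. Then $M$ induces a finite counterexample: there are $k\ge0$, controller choices $C_0,\dots,C_k\subseteq\mathbb{C}$ and the corresponding run $s_0,\dots,s_k$ of $M$ (with $s_{i+1}$ the $C_i$-successor of $s_i$), giving letters $a_i=C_i\cup out(s_i)\in 2^{\mathbb{E}'\cup\mathbb{C}\cup Pr}$, such that concretisability fails locally only on $a_k$: defining $\textit{val}_0$ as the arena's initial valuation and $\textit{val}_{i+1}=\delta(\textit{val}_i,(out(s_i)\cap\mathbb{E})\cup C_i)$, for every $i<k$ step $i$ is consistent while step $k$ is not, where step $i$ is consistent if $\textit{val}_i\models\bigwedge\!\!\bigwedge ST_i$ (w.r.t. the state predicates of $Pr$) for the state predicates $ST_i$ of $out(s_i)$, and, if $i\ge1$, $(\textit{val}_{i-1},\textit{val}_i)\models\bigwedge\!\!\bigwedge TR_i$ (w.r.t. the transition predicates of $Pr$) for the transition predicates $TR_i$ of $out(s_i)$.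
   Context: Theory setting: fix a first-order theory with constants $\mathcal{C}$. For finite $V$, $\mathcal{T}(V)$ are terms over $V$; $V_{prev}=\{v_{prev}\}$ fresh copies. State predicates: predicates over $\mathcal{T}(V)$; transition predicates: over $\mathcal{T}(V\cup V_{prev})$; $Pred(V)$ their union. Valuations $V\to\mathcal{C}$ form $\textit{Val}(V)$. Updates $U:V\to\mathcal{T}(V)$ act by $U(\textit{val})(v)=$ value of $U(v)$ under $\textit{val}$. $\textit{val}\models s$: $\textit{val}$ is a model of $s$; $(\textit{val},\textit{val}')\models t$: $\textit{val}_{prev}\cup\textit{val}'$ is a model of $t$, with $\textit{val}_{prev}(v_{prev})=\textit{val}(v)$. For $S\subseteq T$, $\bigwedge\!\!\bigwedge_T S:=\bigwedge S\wedge\bigwedge_{s\in T\setminus S}\neg s$. Arena $A=\langle V,\textit{val}_0,\delta\rangle$: $\delta$ is a finite-domain partial function from Boolean combinations of $\mathbb{E}\cup\mathbb{C}\cup Pred(V)$ to updates with, for each $\textit{val}$, $E\subseteq\mathbb{E}$, $C\subseteq\mathbb{C}$, exactly one $f\in dom(\delta)$ with $(\textit{val},E\cup C)\models f$; $\delta(\textit{val},E\cup C):=\delta(f)(\textit{val})$. Moore machine: total deterministic transition function $\rightarrow:S\times2^{\mathbb{C}}\to S$ and output $out:S\to2^{\mathbb{E}'\cup Pr}$ (the state set may be infinite). Concretisability of $M$: let $\preceq_A\subseteq\textit{Val}(V)\times S$ be the largest relation such that whenever $\textit{val}\preceq_A s$ with $out(s)=E\cup ST\cup TR$ ($E\subseteq\mathbb{E}'$,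 $ST$ state predicates, $TR$ transition predicates): (1) $\textit{val}\models\bigwedge\!\!\bigwedge ST$ (w.r.t. state predicates of $Pr$); (2) for every $C\subseteq\mathbb{C}$, with $\textit{val}_C=\delta(\textit{val},(E\cap\mathbb{E})\cup C)$, $s_C$ the $C$-successor of $s$, $TR_C$ the transition predicates in $out(s_C)$: (a) $(\textit{val},\textit{val}_C)\models\bigwedge\!\!\bigwedge TR_C$ (w.r.t. transition predicates of $Pr$) and (b) $\textit{val}_C\preceq_A s_C$. $M$ is concretisable w.r.t. $A$ if $\textit{val}_0\preceq_A s_0$. *)

From mathcomp Require Import all_boot.
From Stdlib Require Import ClassicalEpsilon.
Set Implicit Arguments. Unset Strict Implicit. Unset Printing Implicit Defensive.

(* A (fixed, arbitrary) first-order theory, given by its semantics: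
   constants, terms over a variable set X evaluated under a valuation
   X -> Const, and formulas (predicates) over X with a model relation. *)
Record theory := Theory {
  Const : Type;
  Term : Type -> Type;
  teval : forall X : Type, (X -> Const) -> Term X -> Const;
  Form : Type -> Type;
  fsat : forall X : Type, (X -> Const) -> Form X -> Prop }.

Section Defs.
Variable Th : theory.
(* V: finite set of variables; ET = the environment Booleans E;
   EX = E' \ E (so E' = ET + EX, E subset of E'); CP = controller Booleans C;
   I = index set of the finite predicate set Pr. *)
Variables (V ET EX CP I : finType).

Definition Val := V -> Const Th.
Definition StatePred := Form Th V.
(* transition predicates: formulas over V_prev u V, encoded as V + V with
   inl v = v_prev and inr v = v *)
Definition TransPred := Form Th (V + V)%type.
Definition Pred := (StatePred + TransPred)%type.

Definition sat_st (val : Val) (p : StatePred) : Prop := fsat val p.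
Definition sat_tr (val val' : Val) (t : TransPred) : Prop :=
  fsat (fun x : V + V => match x with inl v => val v | inr v => val' v end) t.

Inductive guard :=
| GTrue | GFalse
| GE of ET | GC of CP | GP of StatePred
| GNot of guard | GAnd of guard & guard | GOr of guard & guard.

Fixpoint gsat (val : Val) (E : {set ET}) (C : {set CP}) (g : guard) : Prop :=
  match g with
  | GTrue => True
  | GFalse => False
  | GE e => e \in E
  | GC c => c \in C
  | GP p => sat_st val p
  | GNot g1 => ~ gsat val E C g1
  | GAnd g1 g2 => gsat val E C g1 /\ gsat val E C g2
  | GOr g1 g2 => gsat val E C g1 \/ gsat val E C g2
  end.

Definition update := V -> Term Th V.
Definition apply_update (U : update) (val : Val) : Val := fun v => teval val (U v).

(* Arena <V, val0, delta>; delta is given as a finite list of (guard, update)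
   pairs, with the determinism requirement: for every valuation and every
   E, C exactly one entry's guard is satisfied. *)
Record arena := Arena {
  a_val0 : Val;
  a_delta : seq (guard * update);
  a_det : forall (val : Val) (E : {set ET}) (C : {set CP}),
      exists! j : 'I_(size a_delta), gsat val E C (tnth (in_tuple a_delta) j).1 }.

Definition delta_fun (A : arena) (val : Val) (E : {set ET}) (C : {set CP}) : Val :=
  let j := proj1_sig (constructive_indefinite_description _ (a_det A val E C)) in
  apply_update (tnth (in_tuple (a_delta A)) j).2 val.

(* Moore machine with input 2^C and output 2^(E' u Pr); the output is split
   into its E' part and its Pr part (given by indices in I). *)
Record moore := Moore {
  m_S : Type;
  m_s0 : m_S;
  m_trans : m_S -> {set CP} -> m_S;
  m_outE : m_S -> {set (ET + EX)};
  m_outP : m_S -> {set I} }.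

Variable pr : I -> Pred.

(* val |= /\\ ST  w.r.t. the state predicates of Pr *)
Definition st_ok (M : moore) (val : Val) (s : m_S M) : Prop :=
  forall (i : I) (p : StatePred), pr i = inl p -> (sat_st val p <-> i \in m_outP s).

(* (val, val') |= /\\ TR  w.r.t. the transition predicates of Pr *)
Definition tr_ok (M : moore) (val val' : Val) (s : m_S M) : Prop :=
  forall (i : I) (t : TransPred), pr i = inr t -> (sat_tr val val' t <-> i \in m_outP s).

Definition envE (M : moore) (s : m_S M) : {set ET} := [set e : ET | inl e \in m_outE s].

Definition sim_postfixed (A : arena) (M : moore) (R : Val -> m_S M -> Prop) : Prop :=
  forall val s, R val s ->
    st_ok val s /\
    forall C : {set CP},
      tr_ok val (delta_fun A val (envE s) C) (m_trans s C) /\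
      R (delta_fun A val (envE s) C) (m_trans s C).

Definition preceq (A : arena) (M : moore) (val : Val) (s : m_S M) : Prop :=
  exists R : Val -> m_S M -> Prop, sim_postfixed A R /\ R val s.

Definition concretisable (A : arena) (M : moore) : Prop :=
  @preceq A M (a_val0 A) (m_s0 M).

Fixpoint run_state (M : moore) (Cs : nat -> {set CP}) (i : nat) : m_S M :=
  match i with
  | 0 => m_s0 M
  | i'.+1 => m_trans (run_state M Cs i') (Cs i')
  end.

Fixpoint run_val (A : arena) (M : moore) (Cs : nat -> {set CP}) (i : nat) : Val :=
  match i with
  | 0 => a_val0 A
  | i'.+1 => delta_fun A (run_val A M Cs i') (envE (run_state M Cs i')) (Cs i')
  end.

Definition step_consistent (A : arena) (M : moore) (Cs : nat -> {set CP}) (i : nat) : Prop :=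
  st_ok (run_val A M Cs i) (run_state M Cs i) /\
  (0 < i -> tr_ok (run_val A M Cs i.-1) (run_val A M Cs i) (run_state M Cs i)).

End Defs.

From mathcomp Require Import all_boot.
From Stdlib Require Import Classical.

(* If every run whose steps [0 .. k-1] are consistent were also consistent at
   step [k], then the pairs (val_n, s_n) reached along runs consistent up to
   [n] would form a relation closed under the concretisability conditions:
   the C-successor of such a pair is reached by the same run with its [n]-th
   choice replaced by C, which is again consistent. Hence [val_0 ⪯ s_0]. *)

Section ConsistentRuns.
Variables (Th : theory) (V ET EX CP I : finType).
Variables (pr : I -> Pred Th V) (A : arena Th V ET CP) (M : moore ET EX CP I).
Implicit Types (Cs : nat -> {set CP}) (n : nat).

Lemma run_state_prefix {Cs Cs' n} : (forall j, j < n -> Cs' j = Cs j) ->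
  forall i, i <= n -> run_state M Cs' i = run_state M Cs i.
Proof.
move=> eqCs; elim=> [|i IHi] ltin //=.
by rewrite IHi ?eqCs // ltnW.
Qed.

Lemma run_val_prefix {Cs Cs' n} : (forall j, j < n -> Cs' j = Cs j) ->
  forall i, i <= n -> run_val A M Cs' i = run_val A M Cs i.
Proof.
move=> eqCs; elim=> [|i IHi] ltin //=.
by rewrite IHi ?(run_state_prefix eqCs) ?eqCs ?(ltnW ltin).
Qed.

Lemma step_consistent_prefix {Cs Cs' n i} : (forall j, j < n -> Cs' j = Cs j) ->
  i <= n -> step_consistent pr A M Cs' i = step_consistent pr A M Cs i.
Proof.
move=> eqCs lein; have lepi : i.-1 <= n := leq_trans (leq_pred i) lein.
by rewrite /step_consistent (run_state_prefix eqCs) // !(run_val_prefix eqCs).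
Qed.

Definition consistent_upto Cs n := forall i, i <= n -> step_consistent pr A M Cs i.

Definition set_choice Cs n (C : {set CP}) i := if i == n then C else Cs i.

Lemma set_choice_prefix Cs n C j : j < n -> set_choice Cs n C j = Cs j.
Proof. by rewrite /set_choice => /ltn_eqF ->. Qed.

Lemma run_state_set_choice Cs n C :
  run_state M (set_choice Cs n C) n.+1 = m_trans (run_state M Cs n) C.
Proof.
by rewrite /= (run_state_prefix (@set_choice_prefix Cs n C)) // /set_choice eqxx.
Qed.

Lemma run_val_set_choice Cs n C :
  run_val A M (set_choice Cs n C) n.+1 =
  delta_fun A (run_val A M Cs n) (envE (run_state M Cs n)) C.
Proof.
rewrite /= (run_state_prefix (@set_choice_prefix Cs n C)) //.
by rewrite (run_val_prefix (@set_choice_prefix Cs n C)) // /set_choice eqxx.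
Qed.

Definition consistent_reach (val : Val Th V) (s : m_S M) :=
  exists n Cs, [/\ consistent_upto Cs n, run_val A M Cs n = val & run_state M Cs n = s].

Hypothesis consistent_extends : forall k Cs,
  (forall i, i < k -> step_consistent pr A M Cs i) -> step_consistent pr A M Cs k.

Lemma consistent_upto_set_choice {Cs n} C :
  consistent_upto Cs n -> consistent_upto (set_choice Cs n C) n.+1.
Proof.
move=> consCs.
have consC : consistent_upto (set_choice Cs n C) n.
  move=> i lein; rewrite (step_consistent_prefix (@set_choice_prefix Cs n C)) //.
  exact: consCs.
move=> i; rewrite leq_eqVlt ltnS => /orP[/eqP -> | /consC //].
by apply: consistent_extends => j; rewrite ltnS => /consC.
Qed.

Lemma consistent_reach_postfixed : sim_postfixed pr A consistent_reach.
Proof.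
move=> _ _ [n [Cs [consCs <- <-]]]; split; first by case: (consCs n (leqnn n)).
move=> C; have consC := consistent_upto_set_choice C consCs.
rewrite -run_state_set_choice -run_val_set_choice; split.
  rewrite -(run_val_prefix (@set_choice_prefix Cs n C) n (leqnn n)).
  by case: (consC n.+1 (leqnn _)) => _ /(_ isT).
by exists n.+1, (set_choice Cs n C).
Qed.

Lemma consistent_reach_initial : consistent_reach (a_val0 A) (m_s0 M).
Proof.
exists 0, (fun=> set0); split=> // i; rewrite leqn0 => /eqP ->.
exact: consistent_extends.
Qed.

Lemma concretisable_of_consistent_extends : concretisable pr A M.
Proof.
exists consistent_reach.
by split; [exact: consistent_reach_postfixed | exact: consistent_reach_initial].
Qed.

End ConsistentRuns.

Theorem mainTheorem4 (Th : theory) (V ET EX CP I : finType)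
  (pr : I -> Pred Th V) (pr_inj : injective pr)
  (A : arena Th V ET CP) (M : moore ET EX CP I) :
  ~ concretisable pr A M ->
  exists (k : nat) (Cs : nat -> {set CP}),
    (forall i, i < k -> step_consistent pr A M Cs i) /\
    ~ step_consistent pr A M Cs k.
Proof.
move=> not_conc; apply: NNPP => no_cex; apply: not_conc.
apply: concretisable_of_consistent_extends => k Cs consCs.
by apply: NNPP => not_cons; apply: no_cex; exists k, Cs.
Qed.
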